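(* Let $\hat V$ be the $(1+\chi)\times(1+\chi)$ upper-left block of an iMPO in regular form, and let $R_0:=\mathrm{Id}_{1+\chi}$, $\hat V_0:=\hat V$, and for $n\ge1$ let $\hat V_{n-1}=\hat Q_nR_n$ be a QR decomposition, $\hat V_n:=R_n\hat Q_n$, $L_n:=R_n\cdots R_1$ ($L_0:=\mathrm{Id}$). Then for every $n\ge0$, $$\mathrm{Id}_{1+\chi}\,(T_V)^n=L_n^\dagger L_n.$$
   Context: $\mathcal A$ is the algebra of operators on $\mathbb C^q$ with inner product $\langle\hat A,\hat B\rangle=\mathrm{Tr}[\hat A^\dagger\hat B]/\mathrm{Tr}[\hat 1]$ and orthonormal basis $\{\hat O_\alpha\}$, $\hat O_0=\hat 1$. For an operator-valued matrix $\hat V=\sum_\alpha\hat O_\alpha V_\alpha$ ($(V_\alpha)_{ab}=\langle\hat O_\alpha,\hat V_{ab}\rangle$), the transfer matrix acts on square complex matrices from the left by $XT_V=\sum_\alpha V_\alpha^\dagger XV_\alpha$. An iMPO in regular form of bond dimension $\chi$ is a $(\chi+2)\times(\chi+2)$ matrix with entries in $\mathcal A$ of block form $\begin{pmatrix}\hat 1&\hat{\mathbf c}&\hat d\\0&\hat{\mathsf A}&\hat{\mathbf b}\\0&0&\hat 1\end{pmatrix}$ whose upper-left block is $\hat V=\begin{pmatrix}\hat 1&\hat{\mathbf c}\\0&\hat{\mathsf A}\end{pmatrix}$. A QR decomposition $\hat V=\hat QR$ has $\hat Q$ operator-valued with orthonormal columns, $\sum_a\langle\hat Q_{ab},\hat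 Q_{ac}\rangle=\delta_{bc}$ (equivalently $\sum_\alpha Q_\alpha^\dagger Q_\alpha=\mathrm{Id}$), and $R$ a complex upper-triangular matrix. *)

From HB Require Import structures.
From mathcomp Require Import all_boot all_order all_algebra.
Set Implicit Arguments. Unset Strict Implicit. Unset Printing Implicit Defensive.
Import Order.TTheory GRing.Theory Num.Theory.
Local Open Scope ring_scope.

Section Defs.
Variable C : numClosedFieldType.

Definition hc m n (A : 'M[C]_(m, n)) : 'M[C]_(n, m) := (map_mx Num.conj A)^T.

Definition opip q (A B : 'M[C]_q) : C := \tr (hc A *m B) / \tr (1%:M : 'M[C]_q).

Definition onbasis q (O : 'I_(q * q) -> 'M[C]_q) : Prop :=
  (forall al be, opip (O al) (O be) = (al == be)%:R) /\ exists al0, O al0 = 1%:M.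

Definition compmx q m n (O : 'I_(q * q) -> 'M[C]_q) (V : 'M['M[C]_q]_(m, n)) al
  : 'M[C]_(m, n) := \matrix_(a, b) opip (O al) (V a b).

(* transfer matrix acting from the left: X T_V = sum_alpha V_alpha^dagger X V_alpha *)
Definition transfer q n (O : 'I_(q * q) -> 'M[C]_q) (V : 'M['M[C]_q]_n)
  (X : 'M[C]_n) : 'M[C]_n :=
  \sum_al hc (compmx O V al) *m X *m compmx O V al.

Definition opmulr q m n p (Q : 'M['M[C]_q]_(m, n)) (R : 'M[C]_(n, p))
  : 'M['M[C]_q]_(m, p) := \matrix_(a, b) \sum_c R c b *: Q a c.

Definition opmull q m n p (R : 'M[C]_(m, n)) (Q : 'M['M[C]_q]_(n, p))
  : 'M['M[C]_q]_(m, p) := \matrix_(a, b) \sum_c R a c *: Q c b.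

Definition orthocols q m n (Q : 'M['M[C]_q]_(m, n)) : Prop :=
  forall b c, \sum_a opip (Q a b) (Q a c) = (b == c)%:R.

Definition uppertri n (R : 'M[C]_n) : Prop :=
  forall i j : 'I_n, (j < i)%N -> R i j = 0.

Definition regular_block q chi (V : 'M['M[C]_q]_chi.+1) : Prop :=
  V ord0 ord0 = 1%:M /\ forall a : 'I_chi.+1, a != ord0 -> V a ord0 = 0.

Definition Vseq q n (V : 'M['M[C]_q]_n) (Qs : nat -> 'M['M[C]_q]_n)
  (Rs : nat -> 'M[C]_n) (k : nat) : 'M['M[C]_q]_n :=
  if k is k'.+1 then opmull (Rs k) (Qs k) else V.

Fixpoint Lseq n (Rs : nat -> 'M[C]_n) (k : nat) : 'M[C]_n :=
  if k is k'.+1 then Rs k *m Lseq Rs k' else 1%:M.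

End Defs.

From HB Require Import structures.
From mathcomp Require Import all_boot all_order all_algebra.
Import Order.TTheory GRing.Theory Num.Theory.
Local Open Scope ring_scope.

(* Write V_al, Q_al for component matrices and † for [hc]. A QR step gives
   (V_(n-1))_al = (Q_n)_al R_n and (V_n)_al = R_n (Q_n)_al, so by induction
   L_n V_al = (V_n)_al L_n. Hence (L_n† L_n) T_V = L_n† (Id T_(V_n)) L_n
   = L_n† R_(n+1)† (Id T_(Q_(n+1))) R_(n+1) L_n, and Id T_Q = Id because
   Parseval's identity for the orthonormal basis {O_al} turns Id T_Q into the
   Gram matrix of the columns of Q. None of q > 0, the regular form of V, the
   triangularity of the R_n or R_0 = Id is needed. *)

Section HermitianConjugate.
Context {C : numClosedFieldType}.

Lemma hcE m n (A : 'M[C]_(m, n)) i j : hc A i j = (A j i)^*.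
Proof. by rewrite !mxE. Qed.

Lemma hcM m n p (A : 'M[C]_(m, n)) (B : 'M[C]_(n, p)) :
  hc (A *m B) = hc B *m hc A.
Proof. by rewrite /hc map_mxM trmx_mul. Qed.

Lemma hcK m n (A : 'M[C]_(m, n)) : hc (hc A) = A.
Proof. by apply/matrixP => i j; rewrite !hcE conjCK. Qed.

Lemma hc1 n : hc (1%:M : 'M[C]_n) = 1%:M.
Proof. by rewrite /hc map_mx1 trmx1. Qed.

Lemma mxtrace_hc n (A : 'M[C]_n) : \tr (hc A) = (\tr A)^*.
Proof. by rewrite /hc mxtrace_tr trace_map_mx. Qed.

End HermitianConjugate.

Section InnerProduct.
Context {C : numClosedFieldType} {q : nat}.
Implicit Types A B : 'M[C]_q.

Lemma opip_sumr (I : finType) A (k : I -> C) (B : I -> 'M[C]_q) :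
  opip A (\sum_i k i *: B i) = \sum_i k i * opip A (B i).
Proof.
rewrite /opip mulmx_sumr raddf_sum mulr_suml /=.
by apply: eq_bigr => i _; rewrite -scalemxAr mxtraceZ mulrA.
Qed.

Lemma opip0r A : opip A 0 = 0.
Proof. by rewrite /opip mulmx0 mxtrace0 mul0r. Qed.

Lemma opipC A B : opip B A = (opip A B)^*.
Proof.
rewrite /opip -[A in LHS]hcK -hcM mxtrace_hc rmorphM fmorphV mxtrace1.
by rewrite rmorph_nat.
Qed.

Context {O : 'I_(q * q) -> 'M[C]_q} (hO : onbasis O).

Lemma opip_onbasis (k : 'I_(q * q) -> C) be :
  opip (O be) (\sum_al k al *: O al) = k be.
Proof.
have [ON _] := hO; rewrite opip_sumr (bigD1 be) //= ON eqxx mulr1 big1 ?addr0 //.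
by move=> al /negbTE neq; rewrite ON eq_sym neq mulr0.
Qed.

(* q * q orthonormal, hence free, operators span the q^2-dimensional space. *)
Lemma onbasis_expansion B : B = \sum_al opip (O al) B *: O al.
Proof.
pose X := [tuple O al | al < q * q].
have XE (al : 'I_(q * q)) : X`_al = O al by rewrite -tnth_nth tnth_mktuple.
have freeX : free X.
  apply/freeP => k kX al; rewrite -(opip_onbasis k al).
  by under eq_bigr do rewrite -XE; rewrite kX opip0r.
have spanX : <<X>>%VS = fullv.
  apply/eqP; rewrite eqEdim subvf /=.
  by rewrite dimvf dim_matrix (eqP freeX) size_tuple.
have B_coord : B = \sum_al coord X al B *: O al.
  rewrite {1}(coord_span (_ : B \in <<X>>%VS)) ?spanX ?memvf //.
  by apply: eq_bigr => al _; rewrite XE.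
by rewrite {1}B_coord; apply: eq_bigr => al _; rewrite {2}B_coord opip_onbasis.
Qed.

Lemma parseval A B :
  opip A B = \sum_al (opip (O al) A)^* * opip (O al) B.
Proof.
rewrite {1}(onbasis_expansion B) opip_sumr.
by apply: eq_bigr => al _; rewrite mulrC opipC.
Qed.

End InnerProduct.

Section Transfer.
Context {C : numClosedFieldType} {q : nat} {O : 'I_(q * q) -> 'M[C]_q}.

Lemma compmx_opmulr m n p (Q : 'M['M[C]_q]_(m, n)) (R : 'M[C]_(n, p)) al :
  compmx O (opmulr Q R) al = compmx O Q al *m R.
Proof.
apply/matrixP => a b; rewrite !mxE opip_sumr.
by apply: eq_bigr => c _; rewrite !mxE mulrC.
Qed.

Lemma compmx_opmull m n p (R : 'M[C]_(m, n)) (Q : 'M['M[C]_q]_(n, p)) al :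
  compmx O (opmull R Q) al = R *m compmx O Q al.
Proof.
apply/matrixP => a b; rewrite !mxE opip_sumr.
by apply: eq_bigr => c _; rewrite !mxE.
Qed.

Lemma transfer_opmulr n (Q : 'M['M[C]_q]_n) (R : 'M[C]_n) X :
  transfer O (opmulr Q R) X = hc R *m transfer O Q X *m R.
Proof.
rewrite /transfer mulmx_sumr mulmx_suml; apply: eq_bigr => al _.
by rewrite compmx_opmulr hcM !mulmxA.
Qed.

Lemma transfer_intertwine {n} {V W : 'M['M[C]_q]_n} {L : 'M[C]_n} X :
  (forall al, L *m compmx O V al = compmx O W al *m L) ->
  transfer O V (hc L *m X *m L) = hc L *m transfer O W X *m L.
Proof.
move=> LVW; rewrite /transfer mulmx_sumr mulmx_suml; apply: eq_bigr => al _.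
by rewrite !mulmxA -mulmxA LVW -!mulmxA mulmxA -hcM LVW hcM !mulmxA.
Qed.

Lemma transfer_orthocols {n} {Q : 'M['M[C]_q]_n} :
  onbasis O -> orthocols Q -> transfer O Q 1%:M = 1%:M.
Proof.
move=> hO hQ; apply/matrixP => b c; rewrite /transfer summxE mxE -hQ.
under eq_bigr do rewrite mulmx1 mxE.
rewrite exchange_big; apply: eq_bigr => a _.
by rewrite (parseval hO); apply: eq_bigr => al _; rewrite hcE !mxE.
Qed.

End Transfer.

Lemma Lseq_intertwine {C : numClosedFieldType} {q n} (O : 'I_(q * q) -> 'M[C]_q)
    {V : 'M['M[C]_q]_n} {Qs Rs} :
  (forall k, Vseq V Qs Rs k = opmulr (Qs k.+1) (Rs k.+1)) ->
  forall k al,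
  Lseq Rs k *m compmx O V al = compmx O (Vseq V Qs Rs k) al *m Lseq Rs k.
Proof.
move=> QR; elim=> [|k IH] al; first by rewrite mul1mx mulmx1.
by rewrite /= -mulmxA IH QR compmx_opmulr compmx_opmull !mulmxA.
Qed.

Theorem lemma6 (C : numClosedFieldType) (q chi : nat) (hq : (0 < q)%N)
  (O : 'I_(q * q) -> 'M[C]_q) (V : 'M['M[C]_q]_chi.+1)
  (Qs : nat -> 'M['M[C]_q]_chi.+1) (Rs : nat -> 'M[C]_chi.+1) :
  onbasis O ->
  regular_block V ->
  Rs 0%N = 1%:M ->
  (forall n : nat,
      Vseq V Qs Rs n = opmulr (Qs n.+1) (Rs n.+1) /\
      orthocols (Qs n.+1) /\ uppertri (Rs n.+1)) ->
  forall n : nat, iter n (transfer O V) 1%:M = hc (Lseq Rs n) *m Lseq Rs n.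
Proof.
move=> hO _ _ QR; have QRE k := proj1 (QR k).
elim=> [|n IH]; first by rewrite /= hc1 mulmx1.
rewrite iterS IH -[hc (Lseq Rs n)]mulmx1.
rewrite (transfer_intertwine _ (Lseq_intertwine O QRE n)).
rewrite QRE transfer_opmulr (transfer_orthocols hO (proj1 (proj2 (QR n)))).
by rewrite mulmx1 /= hcM !mulmxA.
Qed.
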